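(* Let $\mathfrak{L}$ be a left Leibniz algebra over a field $\mathbb{F}$, and let $M$ be a left $\mathfrak{L}$-module. Then: (a) $\mathrm{HL}^n(\mathfrak{L},M_s)=\widetilde{\mathrm{HL}}^n(\mathfrak{L},M)$ for every integer $n\ge 0$; (b) $\mathrm{HL}^0(\mathfrak{L},M_a)=M$, and $\mathrm{HL}^n(\mathfrak{L},M_a)\cong\widetilde{\mathrm{HL}}^{n-1}(\mathfrak{L},\mathrm{Hom}_{\mathbb{F}}(\mathfrak{L},M))=\mathrm{HL}^{n-1}(\mathfrak{L},\mathrm{Hom}_{\mathbb{F}}(\mathfrak{L},M)_s)$ for every integer $n\ge 1$, where $\mathrm{Hom}_{\mathbb{F}}(\mathfrak{L},M)$ is a left $\mathfrak{L}$-module via $(x\cdot f)(y):=x\cdot f(y)-f(xy)$.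
   Context: A left Leibniz algebra is a vector space with bilinear product satisfying $x(yz)=(xy)z+y(xz)$. A left $\mathfrak{L}$-module is a vector space $M$ with bilinear $x\cdot m$ such that $(xy)\cdot m=x\cdot(y\cdot m)-y\cdot(x\cdot m)$. A bimodule additionally has a right action with $(x\cdot m)\cdot y=x\cdot(m\cdot y)-m\cdot(xy)$ and $(m\cdot x)\cdot y=m\cdot(xy)-x\cdot(m\cdot y)$. For a left module $M$, $M_s$ is the bimodule with right action $m\cdot x:=-x\cdot m$ and $M_a$ the bimodule with right action $m\cdot x:=0$. $\mathrm{HL}^n(\mathfrak{L},M)$ is the cohomology of $\mathrm{CL}^n(\mathfrak{L},M)=\mathrm{Hom}_{\mathbb{F}}(\mathfrak{L}^{\otimes n},M)$ with $(\mathrm{d}^nf)(x_1,\dots,x_{n+1})=\sum_{i=1}^n(-1)^{i+1}x_i\cdot f(\dots,\hat{x}_i,\dots)+(-1)^{n+1}f(x_1,\dots,x_n)\cdot x_{n+1}+\sum_{i<j}(-1)^if(x_1,\dots,\hat{x}_i,\dots,x_ix_j,\dots,x_{n+1})$ ($x_ix_j$ in the $j$-th position). For a left module $M$, $\widetilde{\mathrm{HL}}^n(\mathfrak{L},M)$ is the cohomology of $\mathrm{CL}^n(\mathfrak{L},M)$ with $(\widetilde{\mathrm{d}}^nf)(x_1,\dots,x_{n+1})=\sum_{i=1}^{n+1}(-1)^{i+1}x_i\cdot f(x_1,\dots,\hat{x}_i,\dots,x_{n+1})+\sum_{i<j}(-1)^if(x_1,\dots,\hat{x}_i,\dots,x_ix_j,\dots,x_{n+1})$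 ($x_ix_j$ in the $j$-th position). *)

From HB Require Import structures.
From mathcomp Require Import all_boot all_order all_algebra.
From mathcomp Require Import boolp functions.
Set Implicit Arguments.
Unset Strict Implicit.
Unset Printing Implicit Defensive.
Import GRing.Theory.
Local Open Scope ring_scope.

Definition bilinear_map (F : fieldType) (A B C : lmodType F) (p : A -> B -> C) :=
  (forall x a u v, p x (a *: u + v) = a *: p x u + p x v) /\
  (forall y a u v, p (a *: u + v) y = a *: p u y + p v y).

Definition left_leibniz (F : fieldType) (L : lmodType F) (mul : L -> L -> L) :=
  bilinear_map mul /\
  forall x y z, mul x (mul y z) = mul (mul x y) z + mul y (mul x z).

Definition left_module (F : fieldType) (L V : lmodType F)
    (mul : L -> L -> L) (act : L -> V -> V) :=
  bilinear_map act /\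
  forall x y m, act (mul x y) m = act x (act y m) - act y (act x m).

Definition ract_s (F : fieldType) (L V : lmodType F) (act : L -> V -> V) :
  V -> L -> V := fun m x => - act x m.
Definition ract_a (F : fieldType) (L V : lmodType F) :
  V -> L -> V := fun _ _ => 0.

(* Cochains: CL^n(L,V) = Hom_F(L^{(x)n}, V) = n-multilinear maps L^n -> V.   *)
(* An n-tuple of arguments is a finite function 'I_n -> L (0-indexed).       *)

Definition cochain (L V : Type) (n : nat) := {ffun 'I_n -> L} -> V.

Definition upd (L : Type) n (x : {ffun 'I_n -> L}) (k : 'I_n) (u : L) :
  {ffun 'I_n -> L} := [ffun l => if l == k then u else x l].

Definition multilinear (F : fieldType) (L V : lmodType F) n (f : cochain L V n) :=
  forall (k : 'I_n) (x : {ffun 'I_n -> L}) (a : F) (u v : L),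
    f (upd x k (a *: u + v)) = a *: f (upd x k u) + f (upd x k v).

Definition del (L : Type) n (i : 'I_n.+1) (x : {ffun 'I_n.+1 -> L}) :
  {ffun 'I_n -> L} := [ffun k => x (lift i k)].

Definition delmul (L : Type) (mul : L -> L -> L) n (i j : 'I_n.+1)
  (x : {ffun 'I_n.+1 -> L}) : {ffun 'I_n -> L} :=
  [ffun k => if lift i k == j then mul (x i) (x j) else x (lift i k)].

(* The Leibniz coboundary d^n for a bimodule with left action act and right  *)
(* action ract (indices are 0-based, so the signs are shifted accordingly):  *)
(* (d^n f)(x_1..x_{n+1}) = sum_{i=1}^n (-1)^{i+1} x_i . f(..\hat x_i..)       *)
(*    + (-1)^{n+1} f(x_1..x_n) . x_{n+1}                                     *)
(*    + sum_{i<j} (-1)^i f(..\hat x_i.., x_i x_j, ..)                         *)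
Definition dHL (F : fieldType) (L V : lmodType F) (mul : L -> L -> L)
    (act : L -> V -> V) (ract : V -> L -> V) n (f : cochain L V n) :
    cochain L V n.+1 := fun x =>
  \sum_(i < n.+1 | (i < n)%N) (-1) ^+ i *: act (x i) (f (del i x))
  + (-1) ^+ n.+1 *: ract (f (del ord_max x)) (x ord_max)
  + \sum_(i < n.+1) \sum_(j < n.+1 | (i < j)%N)
       (-1) ^+ i.+1 *: f (delmul mul i j x).

Definition dHLt (F : fieldType) (L V : lmodType F) (mul : L -> L -> L)
    (act : L -> V -> V) n (f : cochain L V n) : cochain L V n.+1 := fun x =>
  \sum_(i < n.+1) (-1) ^+ i *: act (x i) (f (del i x))
  + \sum_(i < n.+1) \sum_(j < n.+1 | (i < j)%N)
       (-1) ^+ i.+1 *: f (delmul mul i j x).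

Definition cocycle (F : fieldType) (L V : lmodType F)
    (d : forall n, cochain L V n -> cochain L V n.+1) n (f : cochain L V n) :=
  multilinear f /\ forall x, d n f x = 0.

Definition coboundary (F : fieldType) (L V : lmodType F)
    (d : forall n, cochain L V n -> cochain L V n.+1) n : cochain L V n -> Prop :=
  match n return cochain L V n -> Prop with
  | 0 => fun f => forall x, f x = 0
  | m.+1 => fun f => exists g : cochain L V m, multilinear g /\ forall x, f x = d m g x
  end.

(* Equality of the n-th cohomology spaces of two complexes on the same      *)
(* cochain spaces: same cocycles and same coboundaries (hence Z/B = Z'/B').  *)
Definition same_cohomology (F : fieldType) (L V : lmodType F)
    (d1 d2 : forall n, cochain L V n -> cochain L V n.+1) n :=
  (forall f, cocycle d1 f <-> cocycle d2 (n := n) f) /\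
  (forall f, coboundary d1 f <-> coboundary d2 (n := n) f).

(* Linear isomorphism H^{n1}(d1) = Z1/B1  ~=  Z2/B2 = H^{n2}(d2): a map phi   *)
(* which is linear on cocycles, maps Z1 into Z2 and B1 into B2, and induces  *)
(* a bijection of the quotients.  (Over a field every linear map Z1/B1 ->    *)
(* Z2/B2 lifts to Z1 -> Z2, so this is exactly "the quotients are isomorphic".) *)
Definition cohomology_iso (F : fieldType) (L V W : lmodType F)
    (d1 : forall n, cochain L V n -> cochain L V n.+1)
    (d2 : forall n, cochain L W n -> cochain L W n.+1) n1 n2 :=
  exists phi : cochain L V n1 -> cochain L W n2,
    [/\ forall f, cocycle d1 f -> cocycle d2 (phi f),
        forall a f g, cocycle d1 f -> cocycle d1 g ->
          phi (a *: f + g) = a *: phi f + phi g,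
        forall f, cocycle d1 f -> coboundary d1 f -> coboundary d2 (phi f),
        forall f, cocycle d1 f -> coboundary d2 (phi f) -> coboundary d1 f
      & forall h, cocycle d2 h -> exists2 f, cocycle d1 f & coboundary d2 (phi f - h)].

Section HomSpace.
Variables (F : fieldType) (L M : lmodType F).

Definition is_linmap (h : L -> M) : bool :=
  `[< forall a u v, h (a *: u + v) = a *: h u + h v >].
Definition linmap : qualifier 0 (L -> M) := [qualify h | is_linmap h].

Lemma linmap_submod_closed : submod_closed linmap.
Proof.
split.
  by rewrite qualifE; apply/asboolP => a u v /=; rewrite scaler0 addr0.
move=> a f g; rewrite !qualifE => /asboolP Hf /asboolP Hg; apply/asboolP.
move=> b u v; rewrite !fctE Hf Hg !scalerDr !scalerA mulrC.
by rewrite -!addrA; congr (_ + _); rewrite !addrA; congr (_ + _); rewrite addrC.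
Qed.

HB.instance Definition _ := GRing.isSubmodClosed.Build F (L -> M) is_linmap
  linmap_submod_closed.

Record hom := Hom { hom_val :> L -> M; hom_valP : hom_val \is linmap }.
HB.instance Definition _ := [isSub for hom_val].
HB.instance Definition _ := [Choice of hom by <:].
HB.instance Definition _ := [SubChoice_isSubLmodule of hom by <:].

End HomSpace.

(* (When act and mul are bilinear the right-hand side is linear in y; the     *)
(* default 0 of insubd is never used under the hypotheses of the theorem.)    *)
Definition hom_act (F : fieldType) (L M : lmodType F) (mul : L -> L -> L)
    (act : L -> M -> M) (x : L) (h : hom L M) : hom L M :=
  insubd 0 (fun y => act x (h y) - h (mul x y)).

From Pilot Require Import Defs.
From HB Require Import structures.
From mathcomp Require Import all_boot all_order all_algebra.
From mathcomp Require Import boolp functions zify.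
Set Implicit Arguments.
Unset Strict Implicit.
Unset Printing Implicit Defensive.
Import GRing.Theory.
Local Open Scope ring_scope.

(** For (a), the right action m . x = - x . m turns the last term of the
    Leibniz coboundary into the missing (n+1)-st term of the sum defining
    \tilde d.  For (b), currying the last argument identifies CL^{n+1}(L, M)
    with CL^n(L, Hom(L, M)).  As M_a has zero right action, the terms of d f
    in which x_i x_{n+1} occupies the last slot combine with the terms
    x_i . f(.., x_{n+1}) into the action (x_i . h)(x_{n+1}) of x_i on the
    curried cochain h, and the remaining terms are those of \tilde d h; so
    currying is an isomorphism of complexes from degree 1 on.  In degree 0
    the Leibniz coboundary with values in M_a vanishes. *)

Lemma widen_ord_lift_max n (i : 'I_n) : widen_ord (leqnSn n) i = lift ord_max i.
Proof. by apply: val_inj; rewrite [RHS]lift_max. Qed.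

Section RconsFfun.
Variable T : Type.

Definition rcons_ffun n (w : {ffun 'I_n -> T}) (y : T) : {ffun 'I_n.+1 -> T} :=
  [ffun k => if unlift ord_max k is Some k' then w k' else y].

Lemma rcons_ffun_lift n (w : {ffun 'I_n -> T}) y k :
  rcons_ffun w y (lift ord_max k) = w k.
Proof. by rewrite ffunE liftK. Qed.

Lemma rcons_ffun_max n (w : {ffun 'I_n -> T}) y : rcons_ffun w y ord_max = y.
Proof. by rewrite ffunE unlift_none. Qed.

Lemma del_max_rcons_ffun n (w : {ffun 'I_n -> T}) y :
  del ord_max (rcons_ffun w y) = w.
Proof. by apply/ffunP => k; rewrite ffunE rcons_ffun_lift. Qed.

Lemma rcons_ffun_del_max n (x : {ffun 'I_n.+1 -> T}) :
  rcons_ffun (del ord_max x) (x ord_max) = x.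
Proof.
by apply/ffunP => k; rewrite ffunE; case: unliftP => [k' ->|->]; rewrite ?ffunE.
Qed.

Lemma lift_lift_max n (i : 'I_n.+1) (k : 'I_n) :
  lift (lift ord_max i) (lift ord_max k) = lift ord_max (lift i k).
Proof.
apply: val_inj; rewrite [RHS]lift_max /= /bump.
by have := ltn_ord i; have := ltn_ord k; lia.
Qed.

Lemma lift_lift_max_max n (i : 'I_n.+1) :
  lift (lift ord_max i) ord_max = ord_max.
Proof. by apply: val_inj; rewrite /= /bump; have := ltn_ord i; lia. Qed.

Lemma del_lift_max_rcons_ffun n (w : {ffun 'I_n.+1 -> T}) y i :
  del (lift ord_max i) (rcons_ffun w y) = rcons_ffun (del i w) y.
Proof.
apply/ffunP => k; case: (unliftP ord_max k) => [k' ->|->]; rewrite /del ffunE.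
  by rewrite lift_lift_max !rcons_ffun_lift ffunE.
by rewrite lift_lift_max_max !rcons_ffun_max.
Qed.

Variable mul : T -> T -> T.

Lemma delmul_lift_max_rcons_ffun n (w : {ffun 'I_n.+1 -> T}) y i j :
  delmul mul (lift ord_max i) (lift ord_max j) (rcons_ffun w y) =
  rcons_ffun (delmul mul i j w) y.
Proof.
apply/ffunP => k; case: (unliftP ord_max k) => [k' ->|->]; rewrite /delmul ffunE.
  by rewrite lift_lift_max (inj_eq lift_inj) !rcons_ffun_lift ffunE.
by rewrite lift_lift_max_max eq_liftF !rcons_ffun_max.
Qed.

Lemma delmul_max_rcons_ffun n (w : {ffun 'I_n.+1 -> T}) y i :
  delmul mul (lift ord_max i) ord_max (rcons_ffun w y) =
  rcons_ffun (del i w) (mul (w i) y).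
Proof.
apply/ffunP => k; case: (unliftP ord_max k) => [k' ->|->]; rewrite /delmul ffunE.
  by rewrite lift_lift_max lift_eqF !rcons_ffun_lift ffunE.
by rewrite lift_lift_max_max eqxx rcons_ffun_lift !rcons_ffun_max.
Qed.

Lemma rcons_ffun_upd n (w : {ffun 'I_n -> T}) y k t :
  rcons_ffun (upd w k t) y = upd (rcons_ffun w y) (lift ord_max k) t.
Proof.
apply/ffunP => l; case: (unliftP ord_max l) => [l' ->|->]; rewrite [RHS]ffunE.
  by rewrite (inj_eq lift_inj) !rcons_ffun_lift ffunE.
by rewrite eq_liftF !rcons_ffun_max.
Qed.

Lemma rcons_ffun_upd_max n (w : {ffun 'I_n -> T}) y t :
  rcons_ffun w t = upd (rcons_ffun w y) ord_max t.
Proof.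
apply/ffunP => l; case: (unliftP ord_max l) => [l' ->|->]; rewrite [RHS]ffunE.
  by rewrite lift_eqF !rcons_ffun_lift.
by rewrite eqxx rcons_ffun_max.
Qed.

End RconsFfun.

Section Cochains.
Variables (F : fieldType) (L V : lmodType F) (mul : L -> L -> L).

Lemma multilinear0 n : multilinear (fun _ : {ffun 'I_n -> L} => 0 : V).
Proof. by move=> *; rewrite scaler0 addr0. Qed.

Lemma multilinear_lincomb n (f g : cochain L V n) a :
  multilinear f -> multilinear g -> multilinear (a *: f + g).
Proof.
move=> f_multilinear g_multilinear k x b u v.
rewrite !fctE f_multilinear g_multilinear !scalerDr !scalerA mulrC -!addrA.
by congr (_ + _); rewrite addrCA.
Qed.

Lemma dHL_ract_a_deg0 (act : L -> V -> V) (f : cochain L V 0) x :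
  dHL mul act (@ract_a F L V) f x = 0.
Proof.
rewrite /dHL /ract_a scaler0 addr0 big_pred0 ?add0r => [|i]; last by rewrite ord1.
by rewrite big1 // => i _; rewrite big_pred0 // => j; rewrite !ord1.
Qed.

Lemma dHLt_zero (act : L -> V -> V) n x : bilinear_map act ->
  dHLt mul act (fun _ : {ffun 'I_n -> L} => 0) x = 0.
Proof.
move=> [act_lin _]; have act0 y : act y 0 = 0.
  by have := zmod_morphism_linear (act_lin y) 0 0; rewrite !subrr.
rewrite /dHLt big1 ?add0r => [|i _]; last by rewrite act0 scaler0.
by rewrite big1 // => i _; rewrite big1 // => j _; rewrite scaler0.
Qed.

Lemma dHL_ract_s (act : L -> V -> V) n (f : cochain L V n) x :
  dHL mul act (ract_s act) f x = dHLt mul act f x.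
Proof.
rewrite /dHL /dHLt /ract_s; congr (_ + _).
rewrite big_mkcond big_ord_recr /= ltnn addr0 [RHS]big_ord_recr /=.
congr (_ + _); first by apply: eq_bigr => i _; rewrite ltn_ord.
by rewrite exprS mulN1r scaleNr scalerN opprK.
Qed.

End Cochains.

Lemma same_cohomology_ext (F : fieldType) (L V : lmodType F)
    (d1 d2 : forall n, cochain L V n -> cochain L V n.+1) :
  (forall n f x, d1 n f x = d2 n f x) -> forall n, same_cohomology d1 d2 n.
Proof.
move=> d12 n; split=> f.
  by split=> -[f_multilinear df0]; split=> // x; rewrite ?d12 // -d12.
case: n f => [//|n] f; split=> -[g [g_multilinear fE]]; exists g.
  by split=> // x; rewrite fE d12.
by split=> // x; rewrite fE -d12.
Qed.

Section HomModule.
Variables (F : fieldType) (L M : lmodType F).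
Variables (mul : L -> L -> L) (act : L -> M -> M).
Local Notation Hom := (Defs.hom L M).

Lemma hom_linear (h : Hom) : linear_for *:%R (hom_val h).
Proof. by have := hom_valP h; rewrite qualifE => /asboolP. Qed.

HB.instance Definition _ (h : Hom) :=
  GRing.isLinear.Build F L M *:%R (hom_val h) (hom_linear h).

Lemma insubd_linmapK (g : L -> M) :
  linear_for *:%R g -> insubd (0 : Hom) g = g :> (L -> M).
Proof. by move=> g_lin; rewrite insubdK //; apply/asboolP. Qed.

Lemma hom_ext (u v : Hom) : hom_val u =1 hom_val v -> u = v.
Proof. by move=> E; apply: val_inj; apply: funext. Qed.

Lemma hom_val0 y : (0 : Hom) y = 0.
Proof. by rewrite GRing.val0. Qed.

Lemma hom_valD (u v : Hom) y : (u + v) y = u y + v y.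
Proof. by rewrite GRing.valD. Qed.

Lemma hom_valN (u : Hom) y : (- u) y = - u y.
Proof. by rewrite GRing.valN. Qed.

Lemma hom_valZ a (u : Hom) y : (a *: u) y = a *: u y.
Proof. by rewrite GRing.valZ. Qed.

Lemma hom_val_sum I r (P : pred I) (G : I -> Hom) y :
  (\sum_(i <- r | P i) G i) y = \sum_(i <- r | P i) G i y.
Proof. by elim/big_rec2: _ => [|i a b _ <-]; rewrite ?hom_val0 ?hom_valD. Qed.

Hypothesis mul_bilinear : bilinear_map mul.
Hypothesis act_bilinear : bilinear_map act.

Lemma actB x : {morph act x : u v / u - v}.
Proof. exact: zmod_morphism_linear (act_bilinear.1 x). Qed.

Lemma hom_actE x (h : Hom) y :
  hom_act mul act x h y = act x (h y) - h (mul x y).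
Proof.
rewrite /hom_act insubd_linmapK // => a u v.
rewrite mul_bilinear.1 !(linearP (hom_val h)) act_bilinear.1.
by rewrite scalerBr opprD addrACA.
Qed.

Lemma hom_act_bilinear : bilinear_map (hom_act mul act).
Proof.
split=> [x a u v | h a u v]; apply: hom_ext => y.
  rewrite hom_valD hom_valZ !hom_actE !hom_valD !hom_valZ act_bilinear.1.
  by rewrite scalerBr opprD addrACA.
rewrite hom_valD hom_valZ !hom_actE act_bilinear.2 mul_bilinear.2.
by rewrite (linearP (hom_val h)) scalerBr opprD addrACA.
Qed.

Lemma hom_act_left_module :
    (forall x y z, mul x (mul y z) = mul (mul x y) z + mul y (mul x z)) ->
    (forall x y m, act (mul x y) m = act x (act y m) - act y (act x m)) ->
  left_module mul (hom_act mul act).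
Proof.
move=> leibniz act_mul; split; first exact: hom_act_bilinear.
move=> x y h; apply: hom_ext => z.
rewrite hom_valD hom_valN !hom_actE !actB act_mul (leibniz x y z).
rewrite (linearD (hom_val h)) !opprB ?opprD ?opprK.
by rewrite addrACA subrKA subrKA !addrA addrNK addrAC.
Qed.

Definition curry_cochain n (f : cochain L M n.+1) : cochain L Hom n :=
  fun w => insubd 0 (fun y => f (rcons_ffun w y)).

Definition uncurry_cochain n (h : cochain L Hom n) : cochain L M n.+1 :=
  fun x => h (del ord_max x) (x ord_max).

Section Curry.
Variables (n : nat) (f : cochain L M n.+1).
Hypothesis f_multilinear : multilinear f.

Lemma curry_cochainE w y : curry_cochain f w y = f (rcons_ffun w y).
Proof.
rewrite insubd_linmapK // => a u v.
by rewrite (rcons_ffun_upd_max w u) f_multilinear -!rcons_ffun_upd_max.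
Qed.

Lemma multilinear_curry : multilinear (curry_cochain f).
Proof.
move=> k w a u v; apply: hom_ext => y.
by rewrite hom_valD hom_valZ !curry_cochainE !rcons_ffun_upd f_multilinear.
Qed.

Lemma uncurry_curry : uncurry_cochain (curry_cochain f) = f.
Proof.
by apply: funext => x; rewrite /uncurry_cochain curry_cochainE rcons_ffun_del_max.
Qed.

End Curry.

Lemma uncurry_cochain_rcons n (h : cochain L Hom n) w y :
  uncurry_cochain h (rcons_ffun w y) = h w y.
Proof. by rewrite /uncurry_cochain del_max_rcons_ffun rcons_ffun_max. Qed.

Lemma curry_uncurry n (h : cochain L Hom n) :
  curry_cochain (uncurry_cochain h) = h.
Proof.
apply: funext => w; apply: hom_ext => y.
rewrite insubd_linmapK ?uncurry_cochain_rcons // => a u v.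
by rewrite !uncurry_cochain_rcons linearP.
Qed.

Lemma multilinear_uncurry n (h : cochain L Hom n) :
  multilinear h -> multilinear (uncurry_cochain h).
Proof.
move=> h_multilinear k x a u v; rewrite -(rcons_ffun_del_max x).
case: (unliftP ord_max k) => [k' ->|->].
  rewrite -!rcons_ffun_upd !uncurry_cochain_rcons h_multilinear.
  by rewrite hom_valD hom_valZ.
by rewrite -!rcons_ffun_upd_max !uncurry_cochain_rcons linearP.
Qed.

Local Notation dA := (dHL mul act (@ract_a F L M)).
Local Notation dT := (dHLt mul (hom_act mul act)).

Lemma dHLt_curry n (f : cochain L M n.+1) w y : multilinear f ->
  dT (curry_cochain f) w y = dA f (rcons_ffun w y).
Proof.
move=> f_multilinear; set x := rcons_ffun w y.
have act_terms :
    \sum_(i < n.+2 | (i < n.+1)%N) (-1) ^+ i *: act (x i) (f (del i x)) =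
    \sum_(i < n.+1) (-1) ^+ i *: act (w i) (f (rcons_ffun (del i w) y)).
  rewrite big_mkcond big_ord_recr /= ltnn addr0; apply: eq_bigr => i _.
  by rewrite ltn_ord widen_ord_lift_max rcons_ffun_lift del_lift_max_rcons_ffun.
have mul_terms : \sum_(i < n.+2) \sum_(j < n.+2 | (i < j)%N)
      (-1) ^+ i.+1 *: f (delmul mul i j x) =
    \sum_(i < n.+1) (-1) ^+ i.+1 *: f (rcons_ffun (del i w) (mul (w i) y)) +
    \sum_(i < n.+1) \sum_(j < n.+1 | (i < j)%N)
      (-1) ^+ i.+1 *: f (rcons_ffun (delmul mul i j w) y).
  rewrite big_ord_recr /= [X in _ + X]big_pred0 ?addr0 => [|j]; last first.
    by rewrite ltnNge -ltnS ltn_ord.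
  rewrite -big_split; apply: eq_bigr => i _.
  rewrite big_mkcond big_ord_recr /= ltn_ord -big_mkcond /= addrC.
  rewrite widen_ord_lift_max delmul_max_rcons_ffun; congr (_ + _).
  by apply: eq_bigr => j _; rewrite widen_ord_lift_max delmul_lift_max_rcons_ffun.
rewrite /dHL /dHLt /ract_a scaler0 addr0 act_terms mul_terms addrA.
rewrite hom_valD !hom_val_sum; congr (_ + _).
  rewrite -big_split; apply: eq_bigr => i _.
  by rewrite hom_valZ hom_actE !curry_cochainE // scalerBr exprS mulN1r scaleNr.
apply: eq_bigr => i _; rewrite hom_val_sum; apply: eq_bigr => j _.
by rewrite hom_valZ curry_cochainE.
Qed.

Lemma dHL_uncurry n (h : cochain L Hom n) x : multilinear h ->
  dA (uncurry_cochain h) x = dT h (del ord_max x) (x ord_max).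
Proof.
move=> h_multilinear; rewrite -{1}(rcons_ffun_del_max x) -dHLt_curry.
  by rewrite curry_uncurry.
exact: multilinear_uncurry.
Qed.

Lemma curry_cohomology_iso n : cohomology_iso dA dT n.+1 n.
Proof.
exists (@curry_cochain n); split.
- move=> f [f_multilinear df0]; split; first exact: multilinear_curry.
  by move=> w; apply: hom_ext => y; rewrite dHLt_curry // df0 hom_val0.
- move=> a f g [f_multilinear _] [g_multilinear _].
  apply: funext => w; apply: hom_ext => y.
  by rewrite hom_valD hom_valZ !curry_cochainE //; exact: multilinear_lincomb.
- move=> f [f_multilinear _]; case: n f f_multilinear => [|n] f f_multilinear.
    move=> [g [_ fE]] w; apply: hom_ext => y.
    by rewrite curry_cochainE // fE dHL_ract_a_deg0 hom_val0.
  move=> [g [g_multilinear fE]]; exists (curry_cochain g).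
  split; first exact: multilinear_curry.
  by move=> w; apply: hom_ext => y; rewrite curry_cochainE // fE dHLt_curry.
- move=> f [f_multilinear _]; case: n f f_multilinear => [|n] f f_multilinear.
    move=> curry_f0; exists (fun _ => 0); split; first exact: multilinear0.
    move=> x; rewrite dHL_ract_a_deg0 -(uncurry_curry f_multilinear).
    by rewrite /uncurry_cochain curry_f0 hom_val0.
  move=> [g [g_multilinear curry_fE]]; exists (uncurry_cochain g).
  split; first exact: multilinear_uncurry.
  move=> x; rewrite dHL_uncurry // -curry_fE.
  by rewrite -{1}(uncurry_curry f_multilinear).
- move=> h [h_multilinear dh0]; exists (uncurry_cochain h).
    split; first exact: multilinear_uncurry.
    by move=> x; rewrite dHL_uncurry // dh0 hom_val0.
  rewrite curry_uncurry subrr; case: n {h h_multilinear dh0} => [|n] //.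
  exists (fun _ => 0); split; first exact: multilinear0.
  by move=> x; rewrite dHLt_zero //; exact: hom_act_bilinear.
Qed.

End HomModule.

Theorem lemma1p4 (F : fieldType) (L M : lmodType F)
    (mul : L -> L -> L) (act : L -> M -> M) :
  left_leibniz mul -> left_module mul act ->
  (* (a) HL^n(L, M_s) = \tilde{HL}^n(L, M) for all n >= 0 *)
  (forall n : nat,
     same_cohomology (dHL mul act (ract_s act)) (dHLt mul act) n) /\
  (* (b) HL^0(L, M_a) = M *)
  ((forall m : M, cocycle (dHL mul act (@ract_a F L M)) (n := 0) (fun _ => m)) /\
   (forall f : cochain L M 0, cocycle (dHL mul act (@ract_a F L M)) f ->
      exists m : M, f = fun _ => m)) /\
  (* Hom_F(L, M) is a left L-module via (x.f)(y) = x.f(y) - f(xy) *)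
  left_module mul (hom_act mul act) /\
  (* HL^n(L, M_a) ~= \tilde{HL}^{n-1}(L, Hom_F(L,M)) = HL^{n-1}(L, Hom_F(L,M)_s), n >= 1 *)
  (forall n : nat, (1 <= n)%N ->
     cohomology_iso (dHL mul act (@ract_a F L M)) (dHLt mul (hom_act mul act))
       n n.-1 /\
     same_cohomology (dHLt mul (hom_act mul act))
       (dHL mul (hom_act mul act) (ract_s (hom_act mul act))) n.-1).
Proof.
move=> [mul_bilinear leibniz] [act_bilinear act_mul].
split; first exact: same_cohomology_ext (dHL_ract_s mul act).
split; first split.
- by move=> m; split=> [[] //|x]; rewrite dHL_ract_a_deg0.
- move=> f _; exists (f [ffun=> 0]); apply: funext => x; congr f.
  by apply/ffunP => -[].
split; first exact: hom_act_left_module.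
case=> [//|n] _; split; first exact: curry_cohomology_iso.
by apply: same_cohomology_ext => m f x; rewrite dHL_ract_s.
Qed.
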